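(* Let $A$ be a normed algebra, let $S\subseteq A$ be zp-dense in $A$, and let $c\in A$ factorize through zero products in $S$. If $X$ is a normed space and $V:A\times A\to X$ is a bounded bilinear map having the product property at $c$, then $V$ has the product property at zero, i.e. $V(x,y)=0$ whenever $x,y\in A$ satisfy $xy=0$.
   Context: A subset $S$ of a normed algebra $A$ is zp-dense if (1) the norm closure of $\operatorname{span}(S)$ is $A$; (2) for every $u\in S$ there is $v\in S$ with $uv=0$; (3) any $x,y\in A$ with $xy=0$ can be written as norm-convergent series $x=\sum_n\alpha_nu_n$, $y=\sum_n\beta_nv_n$ with scalars $\alpha_n,\beta_n$, $u_i,v_j\in S$ and $u_iv_j=0$ for all $i,j$. For $x,y\in A$ with $xy=0$, $c$ factorizes through $(x,y)$ if there are $a,b\in A$ with $ay=0$, $xb=0$, $ab=c$; $c$ factorizes through zero products in $S$ if it factorizes through every $(x,y)$ with $x,y\in S$, $xy=0$. A bilinear $V:A\times A\to X$ has the product property at $c$ if there is a linear $\varphi:A\to X$ with $V(a,b)=\varphi(ab)$ for all $a,b\in A$ with $ab=c$. *)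

From HB Require Import structures.
From mathcomp Require Import all_boot all_order all_algebra.
From mathcomp Require Import all_classical all_reals all_analysis.
Set Implicit Arguments. Unset Strict Implicit. Unset Printing Implicit Defensive.
Import Order.TTheory GRing.Theory Num.Theory.
Import numFieldNormedType.Exports.
Local Open Scope classical_set_scope.
Local Open Scope ring_scope.

Definition normed_algebra_mul (K : numFieldType) (A : normedModType K)
  (mul : A -> A -> A) : Prop :=
  [/\ (forall a b c, mul a (mul b c) = mul (mul a b) c),
      (forall (k : K) a b c, mul (k *: a + b) c = k *: mul a c + mul b c),
      (forall (k : K) a b c, mul a (k *: b + c) = k *: mul a b + mul a c)
    & (forall a b, `|mul a b| <= `|a| * `|b|)].

Definition lin_span (K : numFieldType) (A : normedModType K) (S : set A) : set A :=
  [set x | exists n (a : 'I_n -> K) (u : 'I_n -> A),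
      (forall i, S (u i)) /\ x = \sum_(i < n) a i *: u i].

Definition series_to (K : numFieldType) (A : normedModType K)
  (alpha : nat -> K) (u : nat -> A) (x : A) : Prop :=
  (fun N : nat => \sum_(0 <= n < N) alpha n *: u n) @ \oo --> x.

Definition zp_dense (K : numFieldType) (A : normedModType K)
  (mul : A -> A -> A) (S : set A) : Prop :=
  [/\ closure (lin_span S) = setT,
      (forall u, S u -> exists v, S v /\ mul u v = 0)
    & (forall x y, mul x y = 0 ->
        exists (alpha beta : nat -> K) (u v : nat -> A),
          [/\ (forall n, S (u n)), (forall n, S (v n)),
              (forall i j, mul (u i) (v j) = 0),
              series_to alpha u x & series_to beta v y])].

Definition factorizes_through (K : numFieldType) (A : normedModType K)
  (mul : A -> A -> A) (c x y : A) : Prop :=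
  exists a b, [/\ mul a y = 0, mul x b = 0 & mul a b = c].

Definition factorizes_zp (K : numFieldType) (A : normedModType K)
  (mul : A -> A -> A) (S : set A) (c : A) : Prop :=
  forall x y, S x -> S y -> mul x y = 0 -> factorizes_through mul c x y.

Definition bilinear_map (K : numFieldType) (A X : normedModType K)
  (V : A -> A -> X) : Prop :=
  (forall (k : K) a b c, V (k *: a + b) c = k *: V a c + V b c) /\
  (forall (k : K) a b c, V a (k *: b + c) = k *: V a b + V a c).

Definition bounded_bilinear (K : numFieldType) (A X : normedModType K)
  (V : A -> A -> X) : Prop :=
  bilinear_map V /\ exists M : K, forall a b, `|V a b| <= M * `|a| * `|b|.

Definition product_property_at (K : numFieldType) (A X : normedModType K)
  (mul : A -> A -> A) (V : A -> A -> X) (c : A) : Prop :=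
  exists phi : A -> X,
    (forall (k : K) a b, phi (k *: a + b) = k *: phi a + phi b) /\
    (forall a b, mul a b = c -> V a b = phi (mul a b)).

From HB Require Import structures.
From mathcomp Require Import all_boot all_order all_algebra.
From mathcomp Require Import all_classical all_reals all_analysis.
Import Order.TTheory GRing.Theory Num.Theory.
Import numFieldNormedType.Exports.
Local Open Scope classical_set_scope.
Local Open Scope ring_scope.
Set Implicit Arguments. Unset Strict Implicit.

(* If u, v in S have uv = 0, pick a, b with av = 0, ub = 0 and ab = c. Then
   (a+u)(b+v), (a+u)b, a(b+v) and ab all equal c, so by bilinearity
   V(u,v) = V(a+u,b+v) - V(a+u,b) - V(a,b+v) + V(a,b) vanishes, each term being
   the value of phi at c. A general pair x, y with xy = 0 is the sum of series
   over such u's and v's, and V(x,y) = 0 follows from continuity of V in each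
   variable separately. *)

Section BoundedLinear.
Variables (K : numFieldType) (A X : normedModType K) (f : A -> X) (C : K).
Hypotheses (f_linear : linear f) (f_bounded : forall a, `|f a| <= C * `|a|).

Let fL : {linear A -> X} :=
  HB.pack f (GRing.isLinear.Build K A X *:%R f f_linear).

Lemma bounded_linear_fun_continuous : continuous f.
Proof.
apply: (@bounded_linear_continuous _ _ _ fL); apply/linear_boundedP.
have normC_bound a : `|f a| <= `|C| * `|a|.
  (* [K] need not be real, but the bound forces [C * `|a|] to be nonnegative. *)
  have Cnorm := le_trans (normr_ge0 _) (f_bounded a).
  by rewrite -[`|a|]normr_id -normrM ger0_norm.
near=> r => a; apply: le_trans (normC_bound a) _.
by rewrite ler_wpM2r //; near: r; apply: nbhs_pinfty_ge; rewrite normr_real.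
Unshelve. all: by end_near. Qed.

Lemma linear_series_eq0 (alpha : nat -> K) (u : nat -> A) (x : A) :
  (forall n, f (u n) = 0) -> series_to alpha u x -> f x = 0.
Proof.
move=> fu0 ux.
have fux : (f \o fun N => \sum_(0 <= n < N) alpha n *: u n) @ \oo --> f x.
  by apply: continuous_cvg => //; apply: bounded_linear_fun_continuous.
suff partial0 : f \o (fun N => \sum_(0 <= n < N) alpha n *: u n) = cst 0.
  by move: fux; rewrite partial0 => /cvg_lim <-//; rewrite lim_cst.
apply/funext => N /=; rewrite -[f]/(fL : A -> X) linear_sum big1 // => n _.
by rewrite linearZ /= fu0 scaler0.
Qed.
End BoundedLinear.

Lemma bounded_bilinear_series_eq0 (K : numFieldType) (A X : normedModType K)
    (V : A -> A -> X) (alpha beta : nat -> K) (u v : nat -> A) (x y : A) :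
  bounded_bilinear V -> (forall i j, V (u i) (v j) = 0) ->
  series_to alpha u x -> series_to beta v y -> V x y = 0.
Proof.
move=> [[VlinL VlinR] [M VM]] Vuv ux vy.
have Vxv j : V x (v j) = 0.
  apply: (linear_series_eq0 (f := V^~ (v j)) (C := M * `|v j|) _ _ (Vuv^~ j) ux).
  - by move=> k a b; apply: VlinL.
  - by move=> a; rewrite mulrAC.
exact: (linear_series_eq0 (VlinR^~ x) (VM x) Vxv vy).
Qed.

Lemma linear_morphD (R : pzRingType) (U W : lmodType R) (f : U -> W) :
  linear f -> {morph f : a b / a + b}.
Proof. by move=> fL a b; rewrite -[a in LHS]scale1r fL scale1r. Qed.

Lemma product_property_zero_through (K : numFieldType) (A X : normedModType K)
    (mul : A -> A -> A) (V : A -> A -> X) (c u v : A) :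
  (forall b, {morph mul^~ b : a a' / a + a'}) ->
  (forall a, {morph mul a : b b' / b + b'}) ->
  (forall b, {morph V^~ b : a a' / a + a'}) ->
  (forall a, {morph V a : b b' / b + b'}) ->
  product_property_at mul V c -> factorizes_through mul c u v -> mul u v = 0 ->
  V u v = 0.
Proof.
move=> mulDl mulDr VDl VDr [phi [_ Vphi]] [a [b [av0 ub0 abc]]] uv0.
have Vc a' b' : mul a' b' = c -> V a' b' = phi c by move=> e; rewrite Vphi e.
have Vab := Vc _ _ abc.
have Vub : V u b = 0.
  by apply: (addrI (V a b)); rewrite -VDl Vc ?Vab ?addr0 // mulDl ub0 addr0.
have Vav : V a v = 0.
  by apply: (addrI (V a b)); rewrite -VDr Vc ?Vab ?addr0 // mulDr av0 addr0.
have Vauv : V (a + u) (b + v) = phi c.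
  by apply: Vc; rewrite mulDl !mulDr av0 ub0 uv0 !addr0.
by move: Vauv; rewrite VDl !VDr Vab Vub Vav !addr0 add0r -[RHS]addr0 => /addrI.
Qed.

Theorem mainTheorem4 (K : numFieldType) (A : normedModType K)
  (mul : A -> A -> A) (S : set A) (c : A) (X : normedModType K)
  (V : A -> A -> X) :
  normed_algebra_mul mul ->
  zp_dense mul S ->
  factorizes_zp mul S c ->
  bounded_bilinear V ->
  product_property_at mul V c ->
  forall x y, mul x y = 0 -> V x y = 0.
Proof.
move=> [_ mulL mulR _] [_ _ zp_series] c_factorizes Vbounded Vc x y xy0.
have [[VL VR] _] := Vbounded.
have mulDl b := linear_morphD (fun k a a' => mulL k a a' b).
have mulDr a := linear_morphD (fun k b b' => mulR k a b b').
have VDl b := linear_morphD (fun k a a' => VL k a a' b).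
have VDr a := linear_morphD (fun k b b' => VR k a b b').
have VS u v : S u -> S v -> mul u v = 0 -> V u v = 0.
  move=> Su Sv uv0; have c_uv := c_factorizes u v Su Sv uv0.
  exact: product_property_zero_through mulDl mulDr VDl VDr Vc c_uv uv0.
have [alpha [beta [u [v [Su Sv uv0 ux vy]]]]] := zp_series x y xy0.
apply: bounded_bilinear_series_eq0 Vbounded _ ux vy => i j.
exact: VS (Su i) (Sv j) (uv0 i j).
Qed.
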